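(* Fix a prime power $q$ and an integer $r\ge 0$. Then the limit $p_r(q)=\lim_{n\to\infty} p_r(q,n)$, with $n$ ranging over integers of the same parity as $r$, exists and satisfies $0<p_r(q)<1$. Furthermore, for even $r\ge 2$, $$\frac{p_r(q)}{p_0(q)}=\frac{q^{r/2}}{\prod_{j=1}^r(q^j-1)},\qquad p_0(q)=\frac{1}{1+S},\quad S=\sum_{k=1}^\infty \frac{q^{k}}{\prod_{j=1}^{2k}(q^j-1)},$$ and for odd $r\ge 3$, $$\frac{p_r(q)}{p_1(q)}=\frac{(q-1)q^{(r-1)/2}}{\prod_{j=1}^r(q^j-1)},\qquad p_1(q)=\frac{1}{1+S'},\quad S'=(q-1)\sum_{k=1}^\infty \frac{q^{k}}{\prod_{j=1}^{2k+1}(q^j-1)}.$$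
   Context: Let ${\mathbb F}_q$ be the finite field of order $q$ and $V={\mathbb F}_q^n$. A differential on $V$ is a linear map $D\colon V\to V$ with $D^2=0$; its homology is $\ker D/\operatorname{im} D$, whose dimension $r$ necessarily has the same parity as $n$. Let $c(q,n)$ be the number of differentials on ${\mathbb F}_q^n$, and $c_r(q,n)$ the number of differentials whose homology has dimension $r$. Define $p_r(q,n)=c_r(q,n)/c(q,n)$ (the probability with respect to the uniform distribution on differentials). *)

From HB Require Import structures.
From mathcomp Require Import all_boot all_order all_algebra all_field.
Set Implicit Arguments. Unset Strict Implicit. Unset Printing Implicit Defensive.
Import GRing.Theory.

(* A differential on F^n is an n x n matrix D (acting on row vectors
   v |-> v *m D) with D^2 = 0. *)
Definition is_differential (F : finFieldType) (n : nat) (D : 'M[F]_n) : bool :=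
  (D *m D == 0)%R.

(* dimension of homology ker D / im D = dim ker D - dim im D (im D <= ker D) *)
Definition homology_dim (F : finFieldType) (n : nat) (D : 'M[F]_n) : nat :=
  (\rank (kermx D) - \rank D)%N.

Definition c_count (F : finFieldType) (n : nat) : nat :=
  #|[set D : 'M[F]_n | is_differential D]|.

Definition cr_count (F : finFieldType) (r n : nat) : nat :=
  #|[set D : 'M[F]_n | is_differential D && (homology_dim D == r)]|.

From Stdlib Require Import Reals.
Open Scope R_scope.

Definition p_rn (F : finFieldType) (r n : nat) : R :=
  INR (cr_count F r n) / INR (c_count F n).

Fixpoint qprod (q : R) (r : nat) : R :=
  match r with
  | O => 1
  | S r' => qprod q r' * (q ^ (S r') - 1)
  end.

(* A differential D of rank k on F_q^n factors as D = A B with A of full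
   column rank, B of full row rank and B A = 0, and the factorizations of D
   form one free orbit (A g, g^-1 B) of GL_k.  Counting the pairs (A, B) gives
   c_{n,k} = R(k,n) R(k,n-k) / R(k,k), where R(k,d) = prod_{i<k} (q^d - q^i);
   the homology of such a D has dimension n - 2k.  For n = 2K + e with e <= 1,
   c_{n,K-j} / c_{n,K} = w_e(j) prod_{K-j < i <= K} (1 - q^-i), where
   w_e(j) = qprod(e) q^j / qprod(2j + e) <= (2/3)^j.  By Tannery's theorem
   p_{2m+e}(q, n) -> w_e(m) / sum_j w_e(j), and the stated formulas are
   w_0(m), w_1(m) and the tails of these two series. *)

From HB Require Import structures.
From mathcomp Require Import all_boot all_order all_algebra all_field.
From mathcomp Require Import zify.

Set Implicit Arguments.
Unset Strict Implicit.
Unset Printing Implicit Defensive.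

Section Counting.
Variable F : finFieldType.
Local Open Scope ring_scope.

Lemma card_rowspace n p (K : 'M[F]_(p, n)) :
  #|[set v : 'rV[F]_n | (v <= K)%MS]| = (#|F| ^ \rank K)%N.
Proof.
have -> : [set v : 'rV[F]_n | (v <= K)%MS] =
          [set u *m row_base K | u in [set: 'rV[F]_(\rank K)]].
  have /eqmxP/andP [sKb sbK] := eq_row_base K.
  apply/setP => v; rewrite inE; apply/idP/imsetP.
    by move=> /submx_trans /(_ sbK) /submxP [u ->]; exists u; rewrite ?inE.
  by move=> [u _ ->]; apply: submx_trans sKb; rewrite submxMl.
rewrite card_imset; last exact: row_free_inj (row_base_free K).
by rewrite cardsT card_mx mul1n.
Qed.

(* The counting argument of [card_GL] in mxalgebra, relative to a subspace. *)
Lemma card_full_rank_sub m n p (K : 'M[F]_(p, n)) :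
  #|[pred A : 'M[F]_(m, n) | (\rank A == m) && (A <= K)%MS]| =
  (\prod_(i < m) (#|F| ^ \rank K - #|F| ^ i))%N.
Proof.
elim: m => [|m IHm].
  rewrite big_ord0 (@eq_card1 _ (0 : 'M_(0, n))) // => A.
  by rewrite flatmx0 !inE mxrank0 sub0mx !eqxx.
rewrite big_ord_recr /= -IHm -sum_nat_const -sum1_card -add1n.
rewrite (partition_big dsubmx
  [pred A : 'M[F]_(m, n) | (\rank A == m) && (A <= K)%MS]) /= => [|A]; last first.
  rewrite !inE -{1 2}(vsubmxK A); move: {A}(_ A) (_ A) => Ad Au /andP [Afull].
  rewrite col_mx_sub => /andP [_ ->]; rewrite andbT.
  rewrite eqn_leq rank_leq_row -(leq_add2l (\rank Au)) -mxrank_sum_cap.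
  rewrite {1 3}[@mxrank]lock addsmxE (eqnP Afull) -lock -addnA.
  by rewrite leq_add ?rank_leq_row ?leq_addr.
apply: eq_bigr => A /andP [rAm AK]; rewrite (reindex (col_mx^~ A)) /=; last first.
  exists usubmx => [v _ | vA]; first by rewrite col_mxKu.
  by case/andP=> _ /eqP <-; rewrite vsubmxK.
transitivity
  #|[set v : 'rV[F]_n | (v <= K)%MS] :\: [set v : 'rV[F]_n | (v <= A)%MS]|.
  rewrite -sum1_card; apply: eq_bigl => v; rewrite !inE col_mxKd eqxx andbT.
  rewrite col_mx_sub AK andbT; congr (_ && _).
  rewrite eqn_leq rank_leq_row /= -(leq_add2r (\rank (v :&: A)%MS)).
  rewrite -addsmxE mxrank_sum_cap (eqnP rAm) addnAC leq_add2r.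
  by rewrite (ltn_leqif (mxrank_leqif_sup _)) ?capmxSl // sub_capmx submx_refl.
rewrite cardsD card_rowspace (setIidPr _) ?card_rowspace ?(eqnP rAm) //.
by apply/subsetP => v; rewrite !inE => /submx_trans; apply.
Qed.

Definition nframes k d := (\prod_(i < k) (#|F| ^ d - #|F| ^ i))%N.

Lemma card_row_free k n : #|[pred B : 'M[F]_(k, n) | row_free B]| = nframes k n.
Proof.
rewrite /nframes; have := card_full_rank_sub k (1%:M : 'M[F]_n); rewrite mxrank1 => <-.
by apply: eq_card => B; rewrite !inE submx1 andbT.
Qed.

Lemma card_row_full_annihilator k n (B : 'M[F]_(k, n)) : row_free B ->
  #|[pred A : 'M[F]_(n, k) | row_full A && (B *m A == 0)]| = nframes k (n - k).
Proof.
move=> freeB; rewrite /nframes; have := card_full_rank_sub k (kermx B^T).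
rewrite mxrank_ker mxrank_tr (eqP freeB) => <-.
rewrite -!sum1_card (reindex (@trmx _ k n)) /=; last first.
  by exists (@trmx _ n k) => X _; rewrite trmxK.
apply: eq_bigl => X; rewrite !inE /row_full mxrank_tr sub_kermx.
by rewrite -(inj_eq (@trmx_inj _ _ _)) trmx_mul trmxK trmx0.
Qed.

Lemma card_full_rank_factorization m n k (A0 : 'M[F]_(m, k)) (B0 : 'M[F]_(k, n)) :
  row_full A0 -> row_free B0 ->
  #|[pred p : 'M[F]_(m, k) * 'M[F]_(k, n) |
      [&& row_full p.1, row_free p.2 & p.1 *m p.2 == A0 *m B0]]| = nframes k k.
Proof.
move=> fullA0 freeB0; pose f g := (A0 *m g, invmx g *m B0).
have f_inj : injective f by move=> g1 g2 [/(row_full_inj fullA0)].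
rewrite -card_row_free -(card_imset _ f_inj); apply: eq_card => -[A B].
rewrite inE /=; apply/and3P/imsetP => [[fullA freeB /eqP AB] | [g]]; last first.
  rewrite inE row_free_unit => unit_g [-> ->]; split.
  - by rewrite /row_full mxrankMfree ?row_free_unit.
  - by rewrite /row_free eqmxMfull ?row_full_unit ?unitmx_inv.
  - by rewrite mulmxA mulmxK.
pose g := pinvmx A0 *m A.
have A_A0 : A = A0 *m (B0 *m pinvmx B) by rewrite mulmxA -AB -mulmxA mulmxVp ?mulmx1.
have A0g : A0 *m g = A.
  by rewrite /g {1}A_A0 (mulmxA (pinvmx A0)) mulVpmx // mul1mx -A_A0.
have gB : g *m B = B0 by rewrite -mulmxA AB mulmxA mulVpmx // mul1mx.
have unit_g : g \in unitmx.
  by case: (@mulmx1_unit _ _ (pinvmx A *m A0) g); rewrite // -mulmxA A0g mulVpmx.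
by exists g; rewrite ?inE ?row_free_unit // /f A0g -gB mulKmx.
Qed.

Lemma mulmx_full_free_eq0 m k l n (A : 'M[F]_(m, k)) (X : 'M[F]_(k, l)) (B : 'M[F]_(l, n)) :
  row_full A -> row_free B -> (A *m X *m B == 0) = (X == 0).
Proof.
move=> fullA freeB.
by rewrite mulmx_free_eq0 // -[X == 0](inj_eq (row_full_inj fullA)) mulmx0.
Qed.

Lemma sqr_mulmx m n (A : 'M[F]_(m, n)) (B : 'M[F]_(n, m)) :
  (A *m B) *m (A *m B) = A *m (B *m A) *m B.
Proof. by rewrite !mulmxA. Qed.

Definition dual_pairs n k := [set p : 'M[F]_(n, k) * 'M[F]_(k, n) |
  [&& row_full p.1, row_free p.2 & p.2 *m p.1 == 0]].

Lemma card_dual_pairs n k : #|dual_pairs n k| = (nframes k n * nframes k (n - k))%N.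
Proof.
rewrite /dual_pairs -card_row_free -sum_nat_const -sum1_card.
rewrite (partition_big snd [pred B : 'M[F]_(k, n) | row_free B]) /=;
  last by move=> [A B]; rewrite inE => /and3P [].
apply: eq_bigr => B freeB; rewrite -(card_row_full_annihilator freeB) -sum1_card.
rewrite (reindex (fun A => (A, B))) /=; last first.
  by exists fst => [A _ | [A B'] /andP [_ /eqP /= ->]].
by apply: eq_bigl => A; rewrite !inE /= freeB eqxx andbT.
Qed.

Definition diffs_of_rank n k := [set D : 'M[F]_n | is_differential D && (\rank D == k)].

Lemma card_diffs_of_rank n k :
  (#|diffs_of_rank n k| * nframes k k = nframes k n * nframes k (n - k))%N.
Proof.
rewrite -card_dual_pairs /dual_pairs -sum_nat_const -sum1_card.
rewrite (partition_big (fun p => p.1 *m p.2) [in diffs_of_rank n k]) /=; last first.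
  move=> [A B]; rewrite !inE /= /is_differential => /and3P [fullA freeB BA0].
  by rewrite sqr_mulmx (eqP BA0) mulmx0 mul0mx eqxx mxrankMfree.
apply: eq_bigr => D; rewrite inE => /andP [diffD /eqP rD].
subst k; rewrite sum1_card -(card_full_rank_factorization (col_base_full D) (row_base_free D)).
apply: eq_card => -[A B]; rewrite [in RHS]unfold_in !inE /= mulmx_base.
case: (boolP (row_full A)) => //= fullA; case: (boolP (row_free B)) => //= freeB.
case: (A *m B =P D) => [AB|]; last by rewrite andbF.
have : A *m B *m (A *m B) == 0 by rewrite AB.
by rewrite sqr_mulmx mulmx_full_free_eq0 // andbT => ->.
Qed.

Lemma homology_dim_diff n (D : 'M[F]_n) : is_differential D ->
  (2 * \rank D <= n)%N /\ homology_dim D = (n - 2 * \rank D)%N.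
Proof.
move=> diffD; have := mxrankS (_ : (D <= kermx D)%MS); rewrite sub_kermx.
by rewrite /homology_dim mxrank_ker => /(_ diffD); split; lia.
Qed.

Lemma cr_count_diffs r k : cr_count F r (r + 2 * k) = #|diffs_of_rank (r + 2 * k) k|.
Proof.
apply: eq_card => D; rewrite !inE.
case: (boolP (is_differential D)) => //= /homology_dim_diff [le ->].
by apply/eqP/eqP; lia.
Qed.

Lemma c_count_diffs n : c_count F n = (\sum_(k < n.+1) #|diffs_of_rank n k|)%N.
Proof.
rewrite /c_count -sum1_card.
rewrite (partition_big (fun D : 'M[F]_n => inord (\rank D) : 'I_n.+1) xpredT) //=.
apply: eq_bigr => k _; rewrite -sum1_card; apply: eq_bigl => D; rewrite !inE.
by case: is_differential; rewrite //= -val_eqE /= inordK // ltnS rank_leq_row.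
Qed.
End Counting.

From Stdlib Require Import Reals Lra.

Open Scope R_scope.

Lemma Un_cv_ext (u v : nat -> R) l : (forall n, u n = v n) -> Un_cv u l -> Un_cv v l.
Proof. by move=> uv cvu e /cvu [N HN]; exists N => n /HN; rewrite uv. Qed.

Lemma Un_cv_const l : Un_cv (fun _ => l) l.
Proof. by move=> e e_gt0; exists 0%nat => n _; rewrite /R_dist Rminus_diag Rabs_R0. Qed.

Lemma Un_cv_inv (u : nat -> R) l : l <> 0 -> Un_cv u l -> Un_cv (fun n => / u n) (/ l).
Proof.
move=> l_neq0; apply: (continuity_seq Rinv); apply: (continuity_pt_inv id) => //.
exact: derivable_continuous_pt (derivable_pt_id l).
Qed.

Lemma Un_cv_pow0 x : Rabs x < 1 -> Un_cv (pow x) 0.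
Proof.
move=> x_lt1 e /(pow_lt_1_zero x x_lt1) [N HN].
by exists N => n /HN; rewrite /R_dist Rminus_0_r.
Qed.

Lemma Un_cv_subn (u : nat -> R) l m : Un_cv u l -> Un_cv (fun n => u (n - m)%nat) l.
Proof. by move=> cvu e /cvu [N HN]; exists (N + m)%nat => n le; apply: HN; lia. Qed.

Lemma Un_cv_sum (a : nat -> nat -> R) (b : nat -> R) M :
  (forall j, Un_cv (a j) (b j)) ->
  Un_cv (fun n => sum_f_R0 (fun j => a j n) M) (sum_f_R0 b M).
Proof. by move=> cva; elim: M => [|M IHM] //=; apply: CV_plus. Qed.

Lemma tannery (a : nat -> nat -> R) (b : nat -> R) T :
  (forall j n, 0 <= a j n <= b j) -> (forall j, Un_cv (a j) (b j)) ->
  Un_cv (sum_f_R0 b) T -> Un_cv (fun n => sum_f_R0 (fun j => a j n) n) T.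
Proof.
move=> dom cva cvb e e_gt0.
have b_ge0 j : 0 <= b j by have := dom j 0%nat; lra.
have le_T n : sum_f_R0 b n <= T by apply: sum_incr.
have [M HM] := cvb (e / 3) ltac:(lra).
have [N HN] := @Un_cv_sum a b M cva (e / 3) ltac:(lra).
exists (N + M.+1)%nat => n n_large; rewrite /R_dist in HM HN *.
have {}HM := HM M (le_n M); have {}HN := HN n ltac:(lia).
have ltMn : (M < n)%coq_nat by lia.
have := le_T n; rewrite !(tech2 _ M n ltMn).
have tail_ge0 : 0 <= sum_f_R0 (fun i => a (S M + i)%coq_nat n) (n - S M)%coq_nat.
  by apply: cond_pos_sum => i; apply: (proj1 (dom _ _)).
have tail_le : sum_f_R0 (fun i => a (S M + i)%coq_nat n) (n - S M)%coq_nat <=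
               sum_f_R0 (fun i => b (S M + i)%coq_nat) (n - S M)%coq_nat.
  by apply: sum_Rle => i _; apply: (proj2 (dom _ _)).
move: HN HM (le_T M); split_Rabs; lra.
Qed.

Lemma sum_f_R0_gt0 (f : nat -> R) K : (forall j, 0 < f j) -> 0 < sum_f_R0 f K.
Proof. by move=> f_gt0; elim: K => [|K IHK] /=; [apply: f_gt0 | have := f_gt0 K.+1; lra]. Qed.

Lemma infinite_sum_tail (a : nat -> R) l :
  infinite_sum a l -> infinite_sum (fun k => a (k + 1)%nat) (l - a 0%nat).
Proof.
move=> cva e /cva [N HN]; exists N => n le_Nn; rewrite /R_dist.
have -> : sum_f_R0 (fun k => a (k + 1)%nat) n - (l - a 0%nat) = sum_f_R0 a n.+1 - l.
  rewrite (decomp_sum a n.+1) /=; last by lia.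
  by rewrite (sum_eq _ (fun i => a i.+1)) => [|i _]; [ring | rewrite addn1].
by apply: HN; lia.
Qed.

Lemma infinite_sum_ext (a b : nat -> R) l :
  (forall n, a n = b n) -> infinite_sum a l -> infinite_sum b l.
Proof. by move=> ab; apply: Un_cv_ext => n; apply: sum_eq => i _. Qed.

Lemma infinite_sum_scal (a : nat -> R) c l :
  infinite_sum a l -> infinite_sum (fun k => a k * c) (l * c).
Proof.
move=> cva; apply: (@Un_cv_ext (fun n => sum_f_R0 a n * c)) => [n|].
  by rewrite Rmult_comm scal_sum.
exact: CV_mult _ _ _ _ cva (Un_cv_const c).
Qed.

Lemma sum_f_R0_trunc (f : nat -> R) K n : (K <= n)%nat ->
  (forall j, (K < j <= n)%nat -> f j = 0) -> sum_f_R0 f n = sum_f_R0 f K.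
Proof.
elim: n => [|n IHn] le_Kn f0; first by have -> : K = 0%nat by lia.
case: (ltngtP K n.+1) => [lt_Kn | | ->] //; last by lia.
by rewrite /= IHn ?f0 ?Rplus_0_r //; [lia | move=> j Hj; apply: f0; lia].
Qed.

Lemma sum_f_R0_rev (f : nat -> R) K :
  sum_f_R0 f K = sum_f_R0 (fun j => f (K - j)%nat) K.
Proof.
elim: K f => [|K IHK] f //.
rewrite (decomp_sum (fun j => f (K.+1 - j)%nat)); last by lia.
rewrite /= (IHK f) subn0 Rplus_comm.
by congr (_ + _); apply: sum_eq => i _; congr f; lia.
Qed.

Section QAnalysis.

Variable q : R.
Hypothesis q_ge2 : 2 <= q.

Lemma qpow_gt0 n : 0 < q ^ n.
Proof. apply: pow_lt; lra. Qed.

Lemma qpow_gt1 n : (0 < n)%nat -> 1 < q ^ n.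
Proof. by move=> n_gt0; rewrite -(pow_O q); apply: Rlt_pow; [lra | lia]. Qed.

Lemma qprod_gt0 r : 0 < qprod q r.
Proof.
elim: r => [|r IHr]; first by rewrite /=; lra.
have := qpow_gt1 (ltn0Sn r); rewrite /= => ?; apply: Rmult_lt_0_compat; lra.
Qed.

Fixpoint qframes (k d : nat) : R :=
  if k is k'.+1 then qframes k' d * (q ^ d - q ^ k') else 1.

Lemma qframesS k d : qframes k.+1 d = qframes k d * (q ^ d - q ^ k).
Proof. by []. Qed.

Lemma qframes_gt0 k d : (k <= d)%nat -> 0 < qframes k d.
Proof.
elim: k => [|k IHk] le_kd /=; first lra.
apply: Rmult_lt_0_compat; first by apply: IHk; lia.
have : q ^ k < q ^ d by apply: Rlt_pow; [lra | lia].
lra.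
Qed.

Lemma qframes_eq0 k d : (d < k)%nat -> qframes k d = 0.
Proof.
elim: k => [|k IHk] lt_dk //=.
have [/IHk -> | le_kd] := ltnP d k; first by rewrite Rmult_0_l.
have -> : d = k by lia.
by rewrite Rminus_diag Rmult_0_r.
Qed.

Lemma qframesSS k d : qframes k.+1 d.+1 = (q ^ d.+1 - 1) * q ^ k * qframes k d.
Proof.
elim: k => [|k IHk]; first by rewrite /=; ring.
by rewrite qframesS IHk /=; ring.
Qed.

Lemma qframes_shift k t :
  qframes k (k + t).+1 * (q ^ t.+1 - 1) = (q ^ (k + t).+1 - 1) * qframes k (k + t).
Proof.
have qk_gt0 := qpow_gt0 k.
have qkt : q ^ (k + t).+1 = q ^ k * q ^ t.+1 by rewrite -pow_add; congr (q ^ _); lia.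
have := qframesSS k (k + t); rewrite qkt => SS.
apply: (Rmult_eq_reg_l (q ^ k)); last lra.
transitivity (qframes k.+1 (k + t).+1); last by rewrite SS; ring.
by rewrite qframesS qkt; ring.
Qed.

Definition qdiffs (n k : nat) : R := qframes k n * qframes k (n - k) / qframes k k.

Lemma qdiffs_gt0 n k : (2 * k <= n)%nat -> 0 < qdiffs n k.
Proof.
move=> le_2kn; apply: Rdiv_lt_0_compat; last exact: qframes_gt0.
by apply: Rmult_lt_0_compat; apply: qframes_gt0; lia.
Qed.

Lemma qdiffs_eq0 n k : (n < 2 * k)%nat -> qdiffs n k = 0.
Proof. by move=> lt_n2k; rewrite /qdiffs (@qframes_eq0 k (n - k)); [lra | lia]. Qed.

Lemma qdiffsS h k :
  qdiffs (h + 2 * k + 2) k.+1 * (q ^ k.+1 - 1) =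
  q ^ k * (q ^ h.+1 - 1) * (q ^ h.+2 - 1) * qdiffs (h + 2 * k + 2) k.
Proof.
set n := (h + 2 * k + 2)%nat; rewrite /qdiffs.
have -> : (n - k.+1)%nat = (k + h.+1)%nat by rewrite /n; lia.
have -> : (n - k)%nat = (k + h.+1).+1 by rewrite /n; lia.
have qn : q ^ n = q ^ k * (q ^ k * q ^ h.+2).
  by rewrite -!pow_add; congr (q ^ _); rewrite /n; lia.
have qY : q ^ (k + h.+1).+1 = q ^ k * q ^ h.+2.
  by rewrite -pow_add; congr (q ^ _); lia.
have := qframes_shift k h.+1; rewrite qY => shift.
have qk_gt0 := qpow_gt0 k; have qk1_gt1 := qpow_gt1 (ltn0Sn k).
have qh2_gt1 := qpow_gt1 (ltn0Sn h.+1).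
have kk_gt0 := qframes_gt0 (leqnn k).
have -> : qframes k (k + h.+1).+1 =
  (q ^ k * q ^ h.+2 - 1) * qframes k (k + h.+1) / (q ^ h.+2 - 1).
  by rewrite -shift; field; lra.
rewrite qframesSS !qframesS qn pow_add; field; lra.
Qed.

(* The limit of [qdiffs n k / qdiffs n (k + m)] for n = 2(k + m) + e as k -> oo,
   see [qdiffs_ratio]. *)
Definition weight (e m : nat) : R := qprod q e * q ^ m / qprod q (2 * m + e).

Fixpoint qpoch (k m : nat) : R :=
  if m is m'.+1 then (1 - / q ^ k.+1) * qpoch k.+1 m' else 1.

Lemma qpochS k m : qpoch k m.+1 = (1 - / q ^ k.+1) * qpoch k.+1 m.
Proof. by []. Qed.

Lemma weight0 e : weight e 0 = 1.
Proof. by rewrite /weight muln0 add0n Rmult_1_r /Rdiv Rinv_r //; have := qprod_gt0 e; lra. Qed.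

Lemma weight_gt0 e m : 0 < weight e m.
Proof.
apply: Rdiv_lt_0_compat; last exact: qprod_gt0.
by apply: Rmult_lt_0_compat; [exact: qprod_gt0 | exact: qpow_gt0].
Qed.

Lemma weightS e m :
  weight e m.+1 = weight e m * q / ((q ^ (2 * m + e).+1 - 1) * (q ^ (2 * m + e).+2 - 1)).
Proof.
rewrite /weight (_ : (2 * m.+1 + e)%nat = (2 * m + e).+2); last by lia.
have := qprod_gt0 (2 * m + e); have := qpow_gt1 (ltn0Sn (2 * m + e)).
have := qpow_gt1 (ltn0Sn (2 * m + e).+1); rewrite /= => *; field; lra.
Qed.

Lemma qpoch_bounds k m : 0 < qpoch k m <= 1.
Proof.
elim: m k => [|m IHm] k; first by rewrite /=; lra.
rewrite qpochS; have [pos le1] := IHm k.+1; have := qpow_gt1 (ltn0Sn k).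
have : 0 < / q ^ k.+1 by apply/Rinv_0_lt_compat/qpow_gt0.
move=> inv_gt0 qk_gt1; have : / q ^ k.+1 < 1 by rewrite -Rinv_1; apply: Rinv_lt_contravar; lra.
by split; nra.
Qed.

Lemma qpoch_cv m : Un_cv (qpoch^~ m) 1.
Proof.
elim: m => [|m IHm]; first exact: Un_cv_const.
have cv_inv : Un_cv (fun k => / q ^ k.+1) 0.
  apply: (@Un_cv_ext (fun k => (/ q) ^ (k + 1)%coq_nat)) => [k|].
    by rewrite Nat.add_1_r pow_inv.
  apply: CV_shift' (Un_cv_pow0 _); rewrite Rabs_pos_eq.
    by rewrite -Rinv_1; apply: Rinv_lt_contravar; lra.
  by apply/Rlt_le/Rinv_0_lt_compat; lra.
have := CV_mult _ _ _ _ (CV_minus _ _ _ _ (Un_cv_const 1) cv_inv) (CV_shift' _ 1 _ IHm).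
rewrite Rminus_0_r Rmult_1_l; apply: Un_cv_ext => k.
by rewrite qpochS Nat.add_1_r.
Qed.

Lemma qdiffs_ratio e m k :
  qdiffs (2 * k + 2 * m + e) k / qdiffs (2 * k + 2 * m + e) (k + m) = weight e m * qpoch k m.
Proof.
elim: m k => [|m IHm] k.
  rewrite addn0 weight0 /= Rmult_1_r /Rdiv Rinv_r //.
  by apply/Rgt_not_eq/qdiffs_gt0; lia.
set n := (2 * k + 2 * m.+1 + e)%nat.
have := IHm k.+1; rewrite (_ : (2 * k.+1 + 2 * m + e)%nat = n); last by rewrite /n; lia.
rewrite (_ : (k.+1 + m)%nat = (k + m.+1)%nat); last by lia.
have := qdiffsS (2 * m + e) k.
rewrite (_ : (2 * m + e + 2 * k + 2)%nat = n); last by rewrite /n; lia.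
move=> succ IH.
have [A_gt1 B_gt1] := (qpow_gt1 (ltn0Sn (2 * m + e)), qpow_gt1 (ltn0Sn (2 * m + e).+1)).
have [qk_gt0 qk1_gt1] := (qpow_gt0 k, qpow_gt1 (ltn0Sn k)).
have [pos1 pos2] : 0 < qdiffs n k.+1 /\ 0 < qdiffs n (k + m.+1).
  by split; apply: qdiffs_gt0; rewrite /n; lia.
have -> : qdiffs n k = qdiffs n k.+1 * (q ^ k.+1 - 1) /
    (q ^ k * (q ^ (2 * m + e).+1 - 1) * (q ^ (2 * m + e).+2 - 1)).
  by rewrite succ; field; lra.
have [qpoch_gt0 _] := qpoch_bounds k.+1 m.
rewrite weightS qpochS (_ : weight e m = qdiffs n k.+1 / qdiffs n (k + m.+1) / qpoch k.+1 m);
  last by rewrite IH; field; lra.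
rewrite -[q ^ k.+1]/(q * q ^ k); field; lra.
Qed.

Lemma weight_le_geom e m : weight e m <= (2 / 3) ^ m.
Proof.
elim: m => [|m IHm]; first by rewrite weight0 /=; lra.
set A := q ^ (2 * m + e).+1; set B := q ^ (2 * m + e).+2.
have le_qA : q <= A by rewrite -{1}(pow_1 q); apply: Rle_pow; [lra | lia].
have le_qqB : q ^ 2 <= B by apply: Rle_pow; [lra | lia].
rewrite (_ : q ^ 2 = q * q) in le_qqB; last by ring.
have D_pos : 0 < (A - 1) * (B - 1) by apply: Rmult_lt_0_compat; nra.
have ratio_le : q / ((A - 1) * (B - 1)) <= 2 / 3.
  have D_ge : (q - 1) * (q * q - 1) <= (A - 1) * (B - 1).
    by apply: Rmult_le_compat; nra.
  apply: (Rmult_le_reg_r ((A - 1) * (B - 1))) => //.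
  rewrite /Rdiv Rmult_assoc Rinv_l; nra.
have ratio_ge0 : 0 <= q / ((A - 1) * (B - 1)).
  by apply/Rlt_le/Rdiv_lt_0_compat; lra.
have := weight_gt0 e m; rewrite weightS -/A -/B /Rdiv Rmult_assoc /=; nra.
Qed.

Lemma weight_summable e : {T | Un_cv (sum_f_R0 (weight e)) T}.
Proof.
apply: (Rseries_CV_comp _ (pow (2 / 3))) => [m|].
  by split; [apply/Rlt_le/weight_gt0 | apply: weight_le_geom].
exists (/ (1 - 2 / 3)); apply: Un_cv_ext (GP_infinite (2 / 3) _) => [n|].
  by apply: sum_eq => i _; ring.
by rewrite Rabs_pos_eq; lra.
Qed.

Definition weight_sum e := proj1_sig (weight_summable e).

Lemma weight_sum_cv e : Un_cv (sum_f_R0 (weight e)) (weight_sum e).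
Proof. exact: proj2_sig (weight_summable e). Qed.

Lemma weight_sum_gt1 e : 1 < weight_sum e.
Proof.
have := sum_incr _ 1 _ (weight_sum_cv e) (fun j => Rlt_le _ _ (weight_gt0 e j)).
by rewrite /= weight0; have := weight_gt0 e 1; lra.
Qed.

Definition damped_weight_sum e K := sum_f_R0 (fun j => weight e j * qpoch (K - j) j) K.

Lemma damped_weight_sum_gt0 e K : 0 < damped_weight_sum e K.
Proof.
apply: sum_f_R0_gt0 => j; apply: Rmult_lt_0_compat; first exact: weight_gt0.
by case: (qpoch_bounds (K - j) j).
Qed.

Lemma damped_weight_sum_cv e : Un_cv (damped_weight_sum e) (weight_sum e).
Proof.
apply: (@tannery (fun j K => weight e j * qpoch (K - j) j)) (weight_sum_cv e) => j.
  move=> K; have := weight_gt0 e j; have := qpoch_bounds (K - j) j; nra.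
rewrite -[X in Un_cv _ X]Rmult_1_r; apply: CV_mult; first exact: Un_cv_const.
exact: Un_cv_subn (qpoch_cv j).
Qed.

Lemma sum_qdiffs e K : (e <= 1)%nat ->
  sum_f_R0 (qdiffs (2 * K + e)) (2 * K + e) = qdiffs (2 * K + e) K * damped_weight_sum e K.
Proof.
move=> le_e1; rewrite (@sum_f_R0_trunc _ K); last 2 first.
- by lia.
- by move=> j Hj; apply: qdiffs_eq0; lia.
rewrite sum_f_R0_rev /damped_weight_sum scal_sum; apply: sum_eq => j le_jK.
have := qdiffs_ratio e j (K - j).
rewrite (_ : (2 * (K - j) + 2 * j + e)%nat = (2 * K + e)%nat); last by lia.
rewrite (_ : (K - j + j)%nat = K); last by lia.
have : 0 < qdiffs (2 * K + e) K by apply: qdiffs_gt0; lia.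
by move=> pos <-; field; lra.
Qed.

Lemma qdiffs_share_cv e m : (e <= 1)%nat ->
  Un_cv (fun k => qdiffs (2 * m + e + 2 * k) k /
                  sum_f_R0 (qdiffs (2 * m + e + 2 * k)) (2 * m + e + 2 * k))
        (weight e m / weight_sum e).
Proof.
move=> le_e1.
apply: (@Un_cv_ext (fun k => weight e m * qpoch k m * / damped_weight_sum e (k + m))).
  move=> k; rewrite (_ : (2 * m + e + 2 * k)%nat = (2 * (k + m) + e)%nat); last by lia.
  rewrite sum_qdiffs // -(qdiffs_ratio e m k).
  rewrite (_ : (2 * k + 2 * m + e)%nat = (2 * (k + m) + e)%nat); last by lia.
  have := damped_weight_sum_gt0 e (k + m); have : 0 < qdiffs (2 * (k + m) + e) (k + m).
    by apply: qdiffs_gt0; lia.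
  by move=> *; field; lra.
have weight_sum_neq0 : weight_sum e <> 0 by have := weight_sum_gt1 e; lra.
have := CV_mult _ _ _ _ (CV_mult _ _ _ _ (Un_cv_const (weight e m)) (qpoch_cv m))
  (Un_cv_inv weight_sum_neq0 (CV_shift' _ m _ (damped_weight_sum_cv e))).
by rewrite Rmult_1_r.
Qed.

Definition plim (r : nat) : R := weight (odd r) r./2 / weight_sum (odd r).

Lemma plim_parity e m : (e <= 1)%nat -> plim (2 * m + e) = weight e m / weight_sum e.
Proof.
move=> le_e1; rewrite /plim (_ : (2 * m + e)%nat = ((e == 1%nat) + m.*2)%nat); last first.
  by case: e le_e1 => [|[|]] //; rewrite -mul2n addnC.
by rewrite half_bit_double oddD odd_double addbF; case: e le_e1 => [|[|]].
Qed.

Lemma plim_cv r :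
  Un_cv (fun k => qdiffs (r + 2 * k) k / sum_f_R0 (qdiffs (r + 2 * k)) (r + 2 * k)) (plim r).
Proof.
have r_eq : (2 * r./2 + odd r)%nat = r by rewrite addnC mul2n odd_double_half.
by have := qdiffs_share_cv r./2 (leq_b1 (odd r)); rewrite -plim_parity ?leq_b1 // r_eq.
Qed.

Lemma weight_lt_sum e m : weight e m < weight_sum e.
Proof.
have w_ge0 j : 0 <= weight e j by apply/Rlt_le/weight_gt0.
have := sum_incr _ m.+1 _ (weight_sum_cv e) w_ge0; have := weight_gt0 e m.+1.
have : weight e m <= sum_f_R0 (weight e) m.
  by case: m => [|m] /=; [lra | have := cond_pos_sum _ m w_ge0; lra].
rewrite [sum_f_R0 _ m.+1]/=; lra.
Qed.

Lemma plim_bounds r : 0 < plim r < 1.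
Proof.
have := weight_sum_gt1 (odd r); have := weight_lt_sum (odd r) r./2.
have := weight_gt0 (odd r) r./2; rewrite /plim => *; split.
  by apply: Rdiv_lt_0_compat; lra.
by apply: (Rmult_lt_reg_r (weight_sum (odd r))); [lra | rewrite /Rdiv Rmult_assoc Rinv_l; lra].
Qed.

Lemma qprod1 : qprod q 1 = q - 1.
Proof. by rewrite /= Rmult_1_l Rmult_1_r. Qed.

Lemma plim_even m : plim (2 * m) / plim 0 = q ^ m / qprod q (2 * m).
Proof.
rewrite -[(2 * m)%nat]addn0 (plim_parity m (leq0n 1)) (plim_parity 0 (leq0n 1)) weight0.
have := weight_sum_gt1 0; have := qprod_gt0 (2 * m + 0).
by rewrite /weight /= Rmult_1_l => *; field; lra.
Qed.

Lemma plim_odd m : plim (2 * m + 1) / plim 1 = (q - 1) * q ^ m / qprod q (2 * m + 1).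
Proof.
rewrite (plim_parity m (leqnn 1)) (plim_parity 0 (leqnn 1)) weight0 /weight qprod1.
by have := weight_sum_gt1 1; have := qprod_gt0 (2 * m + 1); move=> *; field; lra.
Qed.

Lemma plim0_series : exists S,
  infinite_sum (fun k => q ^ (k + 1) / qprod q (2 * (k + 1))) S /\ plim 0 = 1 / (1 + S).
Proof.
exists (weight_sum 0 - 1); split.
  have := infinite_sum_tail (a := weight 0) (weight_sum_cv 0); rewrite weight0.
  by apply: infinite_sum_ext => k; rewrite /weight addn0 /= Rmult_1_l.
rewrite (plim_parity 0 (leq0n 1)) weight0; field.
by have := weight_sum_gt1 0; lra.
Qed.

Lemma plim1_series : exists S,
  infinite_sum (fun k => q ^ (k + 1) / qprod q (2 * (k + 1) + 1)) S /\
  plim 1 = 1 / (1 + (q - 1) * S).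
Proof.
exists ((weight_sum 1 - 1) * / (q - 1)); split.
  have := infinite_sum_tail (a := weight 1) (weight_sum_cv 1); rewrite weight0.
  move=> /(infinite_sum_scal (/ (q - 1))); apply: infinite_sum_ext => k.
  have := qprod_gt0 (2 * (k + 1) + 1).
  by rewrite /weight qprod1 => ?; field; lra.
rewrite (plim_parity 0 (leqnn 1)) weight0; field.
by have := weight_sum_gt1 1; lra.
Qed.

End QAnalysis.

Section Link.
Variable F : finFieldType.
Let q := INR #|F|.

Lemma card_ge2 : 2 <= q.
Proof. by rewrite /q -[2]/(INR 2); apply/le_INR/leP/card_finNzRing_gt1. Qed.

Lemma INR_expn (a b : nat) : INR (expn a b) = INR a ^ b.
Proof. by elim: b => [|b IHb] //; rewrite expnS -multE mult_INR IHb. Qed.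

Lemma INR_nframes k d : INR (nframes F k d) = qframes q k d.
Proof.
elim: k => [|k IHk]; first by rewrite /nframes big_ord0.
rewrite /nframes big_ord_recr /= -/(nframes F k d) -multE mult_INR IHk.
have [le_kd | lt_dk] := leqP k d; last first.
  by rewrite (qframes_eq0 q lt_dk) !Rmult_0_l.
rewrite -minusE minus_INR ?INR_expn //; apply/leP.
by rewrite leq_exp2l // card_finNzRing_gt1.
Qed.

Lemma INR_card_diffs n k : INR #|diffs_of_rank F n k| = qdiffs q n k.
Proof.
have := card_diffs_of_rank F n k; rewrite -!multE => /(f_equal INR).
rewrite !mult_INR !INR_nframes => card_eq.
have kk_gt0 := qframes_gt0 card_ge2 (leqnn k).
apply: (Rmult_eq_reg_r (qframes q k k)); last lra.
by rewrite card_eq /qdiffs; field; lra.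
Qed.

Lemma INR_sum_ord n (f : nat -> nat) :
  INR (\sum_(j < n.+1) f j)%nat = sum_f_R0 (fun j => INR (f j)) n.
Proof.
elim: n => [|n IHn]; first by rewrite big_ord_recr big_ord0.
by rewrite big_ord_recr /= -plusE plus_INR IHn.
Qed.

Lemma p_rn_qdiffs r k :
  p_rn F r (r + 2 * k) = qdiffs q (r + 2 * k) k / sum_f_R0 (qdiffs q (r + 2 * k)) (r + 2 * k).
Proof.
rewrite /p_rn cr_count_diffs c_count_diffs INR_card_diffs.
rewrite (INR_sum_ord _ (fun j => #|diffs_of_rank F (r + 2 * k) j|)).
by congr (_ / _); apply: sum_eq => j _; apply: INR_card_diffs.
Qed.

End Link.

Theorem theorem1 (F : finFieldType) :
  let q := INR #|F| in
  exists pl : nat -> R,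
    (forall r : nat,
        Un_cv (fun k : nat => p_rn F r (r + 2 * k)%nat) (pl r)
        /\ 0 < pl r < 1)
    /\ (forall m : nat, (1 <= m)%nat ->
          pl (2 * m)%nat / pl 0%nat = q ^ m / qprod q (2 * m))
    /\ (exists S : R,
          infinite_sum (fun k : nat => q ^ (k + 1) / qprod q (2 * (k + 1))) S
          /\ pl 0%nat = 1 / (1 + S))
    /\ (forall m : nat, (1 <= m)%nat ->
          pl (2 * m + 1)%nat / pl 1%nat
          = (q - 1) * q ^ m / qprod q (2 * m + 1))
    /\ (exists S' : R,
          infinite_sum (fun k : nat => q ^ (k + 1) / qprod q (2 * (k + 1) + 1)) S'
          /\ pl 1%nat = 1 / (1 + (q - 1) * S')).
Proof.
move=> q; have q_ge2 := card_ge2 F.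
exists (plim q_ge2); split.
  move=> r; split; last exact: plim_bounds.
  by apply: Un_cv_ext (plim_cv q_ge2 r) => k; rewrite p_rn_qdiffs.
split; first by move=> m _; apply: plim_even.
split; first exact: plim0_series.
split; first by move=> m _; apply: plim_odd.
exact: plim1_series.
Qed.
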